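(* Let $\Gamma$ be a gain operator on $\ell^\infty_+(\mathcal I)$. The following are equivalent: (a) the set $\Psi(\Gamma)$ is cofinal; (b) for every $b\in\ell^\infty_+(\mathcal I)$, every trajectory of $\Sigma(\Gamma^{\oplus}_b)$ is norm-bounded, where $\Gamma^\oplus_b(s):=b\oplus\Gamma(s)$; (c) every trajectory of $\Sigma(\hat\Gamma)$ is norm-bounded, where $\hat\Gamma(s):=s\oplus\Gamma(s)$; (d) for every $s\ge0$ there exist $\hat s\ge0$ and $n\in\mathbb N$ with $s\le\Gamma^l(\hat s)$ for $0\le l<n$ and $\Gamma^n(\hat s)\le\hat s$.
   Context: Let $\mathcal I$ be a nonempty countable index set; $\ell^\infty_+(\mathcal I)$ is the cone of nonnegative real families $s=(s_i)_{i\in\mathcal I}$ with $\|s\|:=\sup_i|s_i|<\infty$, ordered componentwise; $\oplus$ is the componentwise maximum. $\mathcal K_\infty$: continuous strictly increasing unbounded $\gamma:\mathbb R_+\to\mathbb R_+$ with $\gamma(0)=0$. For $\mathcal J\subset\mathcal I$, $s_{|\mathcal J}$ agrees with $s$ on $\mathcal J$ and is $0$ elsewhere. Gain operator: for each $i$ a finite (possibly empty) $\mathcal I_i\subset\mathcal I\setminus\{i\}$; directed graph $\mathcal G$ with vertices $\mathcal I$ and edges $ji$, $j\in\mathcal I_i$; a pointwise equicontinuous family $\gamma_{ij}\in\mathcal K_\infty$ ($ji\in E(\mathcal G)$); functions $\mu_i:\ell^\infty_+(\mathcal I)\to[0,\infty]$ with (M1) some $\xi\in\mathcal K_\infty$ has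 $\mu_i(0)=0$, $\mu_i(s)\ge\xi(\|s\|)$; (M2) $\mu_i$ monotone; (M3) for each finite $\mathcal J$, $\mu_i$ restricted to vectors vanishing off $\mathcal J$ is finite-valued and continuous; (M4) for each norm-bounded $A$ and $\varepsilon>0$ there is $\delta>0$ with $\sup_i|\mu_i(s_{|\mathcal I_i})-\mu_i(s^0_{|\mathcal I_i})|\le\varepsilon$ whenever $s^0\in A$, $\|s-s^0\|\le\delta$. $\Gamma_i(s):=\mu_i([\gamma_{ij}(s_j)]_{j\in\mathcal I_i})$ (argument zero outside $\mathcal I_i$). For monotone $T$: $\Psi(T):=\{s:T(s)\le s\}$; $\Sigma(T)$ is the system $s^{n+1}=T(s^n)$, whose trajectories are $(T^n(s))_{n\ge0}$. A set $A$ is cofinal if every $s\in\ell^\infty_+(\mathcal I)$ has some $\hat s\in A$ with $s\le\hat s$. *)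

From Stdlib Require Import Reals List Classical ClassicalDescription.
From Coquelicot Require Import Coquelicot.
Open Scope R_scope.

(* K_infinity functions on R_+ (only values on [0,oo) matter). *)
Definition Kinf (g : R -> R) : Prop :=
  g 0 = 0 /\
  (forall x y, 0 <= x -> x < y -> g x < g y) /\
  (forall x, 0 <= x -> forall eps, 0 < eps -> exists d, 0 < d /\
     forall y, 0 <= y -> Rabs (y - x) < d -> Rabs (g y - g x) < eps) /\
  (forall M, exists x, 0 <= x /\ M < g x).

Definition norm_le {I : Type} (s : I -> R) (M : R) : Prop :=
  forall i, Rabs (s i) <= M.

Definition linfp {I : Type} (s : I -> R) : Prop :=
  (forall i, 0 <= s i) /\ exists M, norm_le s M.

(* the sup norm ||s|| = sup_i |s_i| (meaningful for bounded s) *)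
Definition sup_norm {I : Type} (s : I -> R) : R :=
  real (Lub_Rbar (fun x => exists i, x = Rabs (s i))).

Definition vle {I : Type} (s t : I -> R) : Prop := forall i, s i <= t i.
Definition vmax {I : Type} (s t : I -> R) : I -> R := fun i => Rmax (s i) (t i).

Definition restrict {I : Type} (J : I -> Prop) (s : I -> R) : I -> R :=
  fun j => if excluded_middle_informative (J j) then s j else 0.

Definition inI {I : Type} (Ii : I -> list I) (i : I) : I -> Prop :=
  fun j => In j (Ii i).

Definition gain_operator {I : Type} (Ii : I -> list I)
  (gam : I -> I -> R -> R) (mu : I -> (I -> R) -> Rbar) : Prop :=
  (forall i, ~ In i (Ii i)) /\
  (forall i j, In j (Ii i) -> Kinf (gam i j)) /\
  (forall r, 0 <= r -> forall eps, 0 < eps -> exists d, 0 < d /\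
     forall i j, In j (Ii i) -> forall r', 0 <= r' -> Rabs (r' - r) < d ->
       Rabs (gam i j r' - gam i j r) < eps) /\
  (forall i s, linfp s -> Rbar_le (Finite 0) (mu i s)) /\
  (exists xi, Kinf xi /\ forall i, mu i (fun _ => 0) = Finite 0 /\
     forall s, linfp s -> Rbar_le (Finite (xi (sup_norm s))) (mu i s)) /\
  (forall i s t, linfp s -> linfp t -> vle s t -> Rbar_le (mu i s) (mu i t)) /\
  (forall i (J : list I) s, linfp s -> (forall j, ~ In j J -> s j = 0) ->
     is_finite (mu i s) /\
     forall eps, 0 < eps -> exists d, 0 < d /\
       forall t, linfp t -> (forall j, ~ In j J -> t j = 0) ->
         norm_le (fun j => t j - s j) d ->
         Rabs (real (mu i t) - real (mu i s)) <= eps) /\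
  (forall A : (I -> R) -> Prop, (forall s, A s -> linfp s) ->
     (exists M, forall s, A s -> norm_le s M) ->
     forall eps, 0 < eps -> exists d, 0 < d /\
       forall s0 s, A s0 -> linfp s -> norm_le (fun j => s j - s0 j) d ->
         forall i, Rabs (real (mu i (restrict (inI Ii i) s))
                         - real (mu i (restrict (inI Ii i) s0))) <= eps).

(* Gamma_i(s) = mu_i([gamma_ij(s_j)]_{j in I_i}); finite-valued by (M3). *)
Definition Gamma {I : Type} (Ii : I -> list I)
  (gam : I -> I -> R -> R) (mu : I -> (I -> R) -> Rbar) (s : I -> R) : I -> R :=
  fun i => real (mu i (restrict (inI Ii i) (fun j => gam i j (s j)))).

Definition Psi {I : Type} (T : (I -> R) -> (I -> R)) (s : I -> R) : Prop :=
  linfp s /\ vle (T s) s.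

Definition cofinal {I : Type} (A : (I -> R) -> Prop) : Prop :=
  forall s, linfp s -> exists sh, A sh /\ vle s sh.

Definition all_traj_bounded {I : Type} (T : (I -> R) -> (I -> R)) : Prop :=
  forall s, linfp s -> exists M, forall n : nat, norm_le (Nat.iter n T s) M.

(* If some ŝ ∈ Ψ(Γ) dominates the data, the box [0, ŝ] is invariant under Γ^⊕_b and Γ̂,
   which bounds their trajectories; ŝ itself witnesses (d) with n = 1.
   Conversely, the trajectories of Γ^⊕_s and of Γ̂ started at s increase and satisfy
   Γ(x_n) ≤ x_(n+1); when they are bounded, their componentwise limit lies in Ψ(Γ) above s,
   because each Γ_i depends continuously on the finitely many coordinates in I_i ((M3) and
   continuity of the γ_ij). Under (d) the trajectory of Γ^⊕_s stays below the orbit segment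
   Γ^l(ŝ), l < n, which is bounded since Γ maps ℓ^∞_+ into itself: equicontinuity of the γ_ij
   and (M4) give bounds uniform in i. *)

From Stdlib Require Import Reals List Lra Lia Classical ClassicalDescription
  FunctionalExtensionality IndefiniteDescription.
From Coquelicot Require Import Coquelicot.
Open Scope R_scope.

Definition nonneg {I : Type} (s : I -> R) : Prop := forall i, 0 <= s i.

Lemma vmax_ub_l {I : Type} (a b : I -> R) : vle a (vmax a b).
Proof. intros i; apply Rmax_l. Qed.

Lemma vmax_ub_r {I : Type} (a b : I -> R) : vle b (vmax a b).
Proof. intros i; apply Rmax_r. Qed.

Lemma vmax_lub {I : Type} (a b c : I -> R) : vle a c -> vle b c -> vle (vmax a b) c.
Proof. intros Ha Hb i; apply Rmax_lub; auto. Qed.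

Lemma vmax_nonneg {I : Type} (a b : I -> R) : nonneg a -> nonneg (vmax a b).
Proof. intros Ha i; eapply Rle_trans; [apply Ha | apply vmax_ub_l]. Qed.

Lemma norm_le_of_vle {I : Type} (x y : I -> R) (M : R) :
  nonneg x -> vle x y -> norm_le y M -> norm_le x M.
Proof.
  intros Hx Hxy Hy i; rewrite Rabs_right by (apply Rle_ge, Hx).
  eapply Rle_trans; [apply Hxy | eapply Rle_trans; [apply Rle_abs | apply Hy]].
Qed.

Lemma vmax_linfp {I : Type} (a b : I -> R) : linfp a -> linfp b -> linfp (vmax a b).
Proof.
  intros [Ha [Ma HMa]] [Hb [Mb HMb]]; split; [now apply vmax_nonneg |].
  exists (Rmax Ma Mb); intros i; unfold vmax.
  rewrite Rabs_right by (apply Rle_ge; eapply Rle_trans; [apply Ha | apply Rmax_l]).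
  apply Rmax_lub; eapply Rle_trans; try apply Rle_abs.
  - eapply Rle_trans; [apply HMa | apply Rmax_l].
  - eapply Rle_trans; [apply HMb | apply Rmax_r].
Qed.

Lemma iter_norm_le_of_box_invariant {I : Type} (F : (I -> R) -> I -> R) (s sh : I -> R) (M : R) :
  norm_le sh M -> (forall x, nonneg x -> vle x sh -> nonneg (F x) /\ vle (F x) sh) ->
  nonneg s -> vle s sh -> forall n, norm_le (Nat.iter n F s) M.
Proof.
  intros HM HF Hs Hssh n.
  destruct (Nat.iter_invariant n _ F (fun x => nonneg x /\ vle x sh)
              (fun x Hx => HF x (proj1 Hx) (proj2 Hx)) s (conj Hs Hssh)) as [Hnn Hle].
  exact (norm_le_of_vle _ _ _ Hnn Hle HM).
Qed.

Lemma Kinf_le (g : R -> R) (r r' : R) : Kinf g -> 0 <= r -> r <= r' -> g r <= g r'.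
Proof.
  intros (_ & Hinc & _) Hr Hrr'.
  destruct (Req_dec r r') as [<- | Hne]; [lra |].
  left; apply Hinc; lra.
Qed.

Lemma Kinf_nonneg (g : R -> R) (r : R) : Kinf g -> 0 <= r -> 0 <= g r.
Proof.
  intros Hg Hr. rewrite <- (proj1 Hg). apply Kinf_le; auto; lra.
Qed.

Lemma Un_cv_le_const (u : nat -> R) (l M : R) :
  Un_cv u l -> (forall n, u n <= M) -> l <= M.
Proof.
  intros Hu HM. apply Rnot_lt_le; intros Hlt.
  destruct (Hu (l - M)) as [N HN]; [lra |].
  specialize (HN N (le_n N)); specialize (HM N).
  unfold Rdist in HN; apply Rabs_def2 in HN; lra.
Qed.

Lemma eventually_in_list {A : Type} (L : list A) (P : A -> nat -> Prop) :
  (forall a, In a L -> exists N, forall n, (N <= n)%nat -> P a n) ->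
  exists N, forall a, In a L -> forall n, (N <= n)%nat -> P a n.
Proof.
  induction L as [| a L IH]; intros HL.
  - exists O; intros _ [].
  - destruct (HL a (or_introl eq_refl)) as [Na HNa].
    destruct IH as [NL HNL]; [intros b Hb; apply HL; now right |].
    exists (Nat.max Na NL); intros b [<- | Hb] n Hn.
    + apply HNa; lia.
    + apply HNL; auto; lia.
Qed.

Lemma norm_le_of_finite_support {A : Type} (L : list A) (s : A -> R) :
  (forall a, ~ In a L -> s a = 0) -> exists M, norm_le s M.
Proof.
  intros Hsupp.
  assert (HL : exists M, 0 <= M /\ forall a, In a L -> Rabs (s a) <= M).
  { clear Hsupp; induction L as [| b L IH].
    - exists 0; split; [lra | intros _ []].
    - destruct IH as [M [HM0 HM]]; exists (Rmax (Rabs (s b)) M); split.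
      + eapply Rle_trans; [exact HM0 | apply Rmax_r].
      + intros a [<- | Ha]; [apply Rmax_l |].
        eapply Rle_trans; [apply HM; exact Ha | apply Rmax_r]. }
  destruct HL as [M [HM0 HM]]; exists M; intros a.
  destruct (classic (In a L)) as [Ha | Ha]; [auto |].
  rewrite (Hsupp a Ha), Rabs_R0; exact HM0.
Qed.

Lemma norm_le_finite_family {A : Type} (f : nat -> A -> R) (m : nat) :
  (forall l, (l < m)%nat -> exists M, norm_le (f l) M) ->
  exists M, forall l, (l < m)%nat -> norm_le (f l) M.
Proof.
  induction m as [| m IH]; intros Hf.
  - exists 0; intros l Hl; lia.
  - destruct IH as [M HM]; [intros l Hl; apply Hf; lia |].
    destruct (Hf m (Nat.lt_succ_diag_r m)) as [Mm HMm].
    exists (Rmax M Mm); intros l Hl a.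
    destruct (Nat.eq_dec l m) as [-> | Hne].
    + eapply Rle_trans; [apply HMm | apply Rmax_r].
    + eapply Rle_trans; [apply HM; lia | apply Rmax_l].
Qed.

Lemma equicontinuous_uniform (F : (R -> R) -> Prop) (a b : R) :
  (forall t, a <= t <= b -> forall eps, 0 < eps -> exists d, 0 < d /\
     forall f, F f -> forall r, a <= r <= b -> Rabs (r - t) < d -> Rabs (f r - f t) < eps) ->
  forall eps, 0 < eps -> exists d, 0 < d /\
     forall f, F f -> forall x y, a <= x <= b -> a <= y <= b -> Rabs (x - y) < d ->
       Rabs (f x - f y) < eps.
Proof.
  intros Heq eps Heps.
  (* Halving the modulus at t keeps every point within d of x inside the full modulus of t. *)
  assert (Hdelta : forall t, exists d : posreal, a <= t <= b -> forall f, F f ->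
            forall r, a <= r <= b -> Rabs (r - t) < 2 * d -> Rabs (f r - f t) < eps / 2).
  { intros t. destruct (Rle_dec a t) as [Hat |]; [destruct (Rle_dec t b) as [Htb |] |].
    - destruct (Heq t (conj Hat Htb) (eps / 2)) as [d [Hd Hdt]]; [lra |].
      assert (Hd2 : 0 < d / 2) by lra.
      exists (mkposreal _ Hd2); intros _ f Hf r Hr Hrt; apply Hdt; simpl in Hrt; auto; lra.
    - exists (mkposreal _ Rlt_0_1); intros; lra.
    - exists (mkposreal _ Rlt_0_1); intros; lra. }
  set (delta t := proj1_sig (constructive_indefinite_description _ (Hdelta t))).
  assert (Hdeltat : forall t, a <= t <= b -> forall f, F f ->
            forall r, a <= r <= b -> Rabs (r - t) < 2 * delta t -> Rabs (f r - f t) < eps / 2).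
  { intros t; exact (proj2_sig (constructive_indefinite_description _ (Hdelta t))). }
  destruct (compactness_value_1d a b delta) as [d Hcover].
  exists d; split; [apply cond_pos |].
  intros f Hf x y Hx Hy Hxy. apply NNPP; intros Hfar.
  apply (Hcover x Hx); intros (t & Ht & Hxt & Hdt).
  apply Hfar.
  assert (Hyt : Rabs (y - t) < 2 * delta t).
  { replace (y - t) with ((y - x) + (x - t)) by ring.
    rewrite Rabs_minus_sym in Hxy.
    pose proof (Rabs_triang (y - x) (x - t)); lra. }
  assert (Hxt' : Rabs (x - t) < 2 * delta t) by (pose proof (cond_pos (delta t)); lra).
  pose proof (Hdeltat t Ht f Hf x Hx Hxt') as H1.
  pose proof (Hdeltat t Ht f Hf y Hy Hyt) as H2.
  apply Rabs_def2 in H1; apply Rabs_def2 in H2; apply Rabs_def1; lra.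
Qed.

Lemma bounded_of_bounded_increments (d c R0 : R) : 0 < d -> 0 <= c ->
  exists B, forall f : R -> R, f 0 <= 0 ->
    (forall x y, 0 <= y <= x -> x <= R0 -> x - y <= d -> f x <= f y + c) ->
    forall x, 0 <= x <= R0 -> f x <= B.
Proof.
  intros Hd Hc. destruct (INR_unbounded (R0 / d)) as [k Hk].
  exists (INR k * c); intros f Hf0 Hstep.
  assert (Hclimb : forall k x, 0 <= x <= R0 -> x <= INR k * d -> f x <= INR k * c).
  { clear k Hk; induction k as [| k IH]; intros x Hx Hxk.
    - simpl in *; replace x with 0 by lra; lra.
    - rewrite S_INR in *; pose proof (pos_INR k).
      destruct (Rle_dec x (INR k * d)) as [Hle | Hgt].
      + specialize (IH x Hx Hle); nra.
      + set (y := Rmax 0 (x - d)).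
        assert (Hy0 : 0 <= y) by apply Rmax_l.
        assert (Hyx : y <= x) by (apply Rmax_lub; lra).
        assert (Hxy : x - y <= d) by (pose proof (Rmax_r 0 (x - d)); unfold y; lra).
        assert (Hyk : y <= INR k * d) by (apply Rmax_lub; nra).
        specialize (IH y (conj Hy0 (Rle_trans _ _ _ Hyx (proj2 Hx))) Hyk).
        specialize (Hstep x y (conj Hy0 Hyx) (proj2 Hx) Hxy); lra. }
  intros x Hx; apply Hclimb; auto.
  apply Rmult_gt_compat_r with (r := d) in Hk; [| lra].
  unfold Rdiv in Hk; rewrite Rmult_assoc, Rinv_l, Rmult_1_r in Hk; lra.
Qed.

Section GainOperator.

Variables (I : Type) (Ii : I -> list I) (gam : I -> I -> R -> R) (mu : I -> (I -> R) -> Rbar).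
Hypothesis Hgain : gain_operator Ii gam mu.

Notation G := (Gamma Ii gam mu).

Definition gain_input (x : I -> R) (i : I) : I -> R :=
  restrict (inI Ii i) (fun j => gam i j (x j)).

Lemma Gamma_gain_input x i : G x i = real (mu i (gain_input x i)).
Proof. reflexivity. Qed.

Lemma gain_input_support x i j : ~ In j (Ii i) -> gain_input x i j = 0.
Proof.
  intros Hj; unfold gain_input, restrict.
  destruct (excluded_middle_informative (inI Ii i j)); [contradiction | reflexivity].
Qed.

Lemma gain_input_le x y i : nonneg x -> vle x y -> vle (gain_input x i) (gain_input y i).
Proof.
  intros Hx Hxy j; unfold gain_input, restrict.
  destruct (excluded_middle_informative (inI Ii i j)) as [Hj | _]; [| lra].
  destruct Hgain as (_ & HK & _); apply Kinf_le; auto.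
Qed.

Lemma gain_input_linfp x i : nonneg x -> linfp (gain_input x i).
Proof.
  intros Hx; split.
  - intros j; unfold gain_input, restrict.
    destruct (excluded_middle_informative (inI Ii i j)) as [Hj | _]; [| lra].
    destruct Hgain as (_ & HK & _); apply Kinf_nonneg; auto.
  - apply (norm_le_of_finite_support (Ii i)), gain_input_support.
Qed.

Lemma mu_finite i s : linfp s -> (forall j, ~ In j (Ii i) -> s j = 0) -> is_finite (mu i s).
Proof. intros Hs Hsupp; destruct Hgain as (_ & _ & _ & _ & _ & _ & HM3 & _); now apply (HM3 i (Ii i)). Qed.

Lemma mu_real_le i s t : linfp s -> linfp t -> vle s t ->
  (forall j, ~ In j (Ii i) -> t j = 0) -> real (mu i s) <= real (mu i t).
Proof.
  intros Hs Ht Hst Hsupp.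
  assert (Hsupp_s : forall j, ~ In j (Ii i) -> s j = 0).
  { intros j Hj; specialize (Hst j); rewrite (Hsupp j Hj) in Hst; pose proof (proj1 Hs j); lra. }
  destruct Hgain as (_ & _ & _ & _ & _ & HM2 & _).
  pose proof (HM2 i s t Hs Ht Hst) as Hle.
  rewrite <- (mu_finite i s Hs Hsupp_s), <- (mu_finite i t Ht Hsupp) in Hle; exact Hle.
Qed.

Lemma Gamma_nonneg x : nonneg x -> nonneg (G x).
Proof.
  intros Hx i; rewrite Gamma_gain_input.
  pose proof (gain_input_linfp x i Hx) as Hlin.
  destruct Hgain as (_ & _ & _ & Hpos & _).
  pose proof (Hpos i _ Hlin) as H0.
  rewrite <- (mu_finite i _ Hlin (gain_input_support x i)) in H0; exact H0.
Qed.

Lemma Gamma_mono x y : nonneg x -> vle x y -> vle (G x) (G y).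
Proof.
  intros Hx Hxy i; rewrite !Gamma_gain_input.
  assert (Hy : nonneg y) by (intros j; specialize (Hx j); specialize (Hxy j); lra).
  apply mu_real_le; auto using gain_input_linfp, gain_input_le, gain_input_support.
Qed.

Lemma gam_bounded R0 : exists C, forall i j, In j (Ii i) ->
  forall r, 0 <= r <= R0 -> gam i j r <= C.
Proof.
  set (F g := exists i j, In j (Ii i) /\ g = gam i j).
  destruct (equicontinuous_uniform F 0 R0) with (eps := 1) as [d [Hd Hunif]]; [| lra |].
  { intros t Ht eps Heps.
    destruct Hgain as (_ & _ & Heq & _).
    destruct (Heq t (proj1 Ht) eps Heps) as [d [Hd Hdt]].
    exists d; split; auto.
    intros g (i & j & Hij & ->) r Hr Hrt; apply Hdt; auto; lra. }
  destruct (bounded_of_bounded_increments (d / 2) 1 R0) as [B HB]; [lra | lra |].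
  exists B; intros i j Hij; apply HB.
  - destruct Hgain as (_ & HK & _); rewrite (proj1 (HK i j Hij)); lra.
  - intros x y Hyx HxR Hxy.
    assert (Hclose : Rabs (gam i j x - gam i j y) < 1).
    { apply (Hunif (gam i j)); [exists i, j; auto | lra | lra |].
      rewrite Rabs_right; lra. }
    apply Rabs_def2 in Hclose; lra.
Qed.

Lemma mu_const_bounded C : exists B, forall i c, 0 <= c <= C ->
  real (mu i (restrict (inI Ii i) (fun _ => c))) <= B.
Proof.
  destruct Hgain as (_ & _ & _ & _ & (xi & _ & Hmu0) & _ & _ & HM4).
  set (A s := exists c, 0 <= c <= C /\ s = (fun _ : I => c)).
  assert (HA_lin : forall s, A s -> linfp s).
  { intros s (c & Hc & ->); split; [intros; simpl; lra | exists c; intros j; rewrite Rabs_right; lra]. }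
  destruct (HM4 A HA_lin) with (eps := 1) as [d [Hd Hclose]]; [| lra |].
  { exists C; intros s (c & Hc & ->) j; rewrite Rabs_right; lra. }
  destruct (bounded_of_bounded_increments d 1 C) as [B HB]; [exact Hd | lra |].
  exists B; intros i; apply HB.
  - replace (restrict (inI Ii i) (fun _ : I => 0)) with (fun _ : I => 0).
    + rewrite (proj1 (Hmu0 i)); simpl; lra.
    + apply functional_extensionality; intros j; unfold restrict.
      destruct (excluded_middle_informative _); reflexivity.
  - intros x y Hyx HxC Hxy.
    assert (Hlin : linfp (fun _ : I => x)) by (apply HA_lin; exists x; split; [lra | auto]).
    specialize (Hclose (fun _ => y) (fun _ => x) ltac:(exists y; split; [lra | auto]) Hlin
                  ltac:(intros j; rewrite Rabs_right; lra) i).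
    apply Rabs_le_between in Hclose; lra.
Qed.

Lemma Gamma_linfp x : linfp x -> linfp (G x).
Proof.
  intros [Hx [M HM]].
  destruct (gam_bounded M) as [C HC].
  set (C' := Rmax 0 C).
  assert (HC' : 0 <= C') by apply Rmax_l.
  destruct (mu_const_bounded C') as [B HB].
  split; [now apply Gamma_nonneg |].
  exists B; intros i.
  rewrite Rabs_right by (apply Rle_ge, Gamma_nonneg; auto).
  eapply Rle_trans; [| apply (HB i C'); lra].
  assert (Hbox_lin : linfp (restrict (inI Ii i) (fun _ : I => C'))).
  { split; [| exists C']; intros j; unfold restrict;
      destruct (excluded_middle_informative _);
      rewrite ?Rabs_R0, ?Rabs_right; lra. }
  rewrite Gamma_gain_input; apply mu_real_le; auto using gain_input_linfp.
  - intros j; unfold gain_input, restrict.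
    destruct (excluded_middle_informative (inI Ii i j)) as [Hj | _]; [| lra].
    eapply Rle_trans; [| apply Rmax_r].
    apply (HC i j Hj); split; [apply Hx |].
    eapply Rle_trans; [apply Rle_abs | apply HM].
  - intros j Hj; unfold restrict.
    destruct (excluded_middle_informative (inI Ii i j)); [contradiction | reflexivity].
Qed.


Lemma Gamma_cv (x : nat -> I -> R) (xs : I -> R) i :
  (forall n, nonneg (x n)) -> nonneg xs -> (forall j, Un_cv (fun n => x n j) (xs j)) ->
  Un_cv (fun n => G (x n) i) (G xs i).
Proof.
  intros Hx Hxs Hcv eps Heps.
  destruct Hgain as (_ & HK & _ & _ & _ & _ & HM3 & _).
  destruct (HM3 i (Ii i) (gain_input xs i)) as [_ Hcont];
    [apply gain_input_linfp, Hxs | apply gain_input_support |].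
  destruct (Hcont (eps / 2)) as [d [Hd Hclose]]; [lra |].
  destruct (eventually_in_list (Ii i)
              (fun j n => Rabs (gam i j (x n j) - gam i j (xs j)) < d)) as [N HN].
  { intros j Hj; destruct (HK i j Hj) as (_ & _ & Hgcont & _).
    destruct (Hgcont (xs j) (Hxs j) d Hd) as [dj [Hdj Hgj]].
    destruct (Hcv j dj Hdj) as [N HN].
    exists N; intros n Hn; apply Hgj; [apply Hx | apply HN; lia]. }
  exists N; intros n Hn; unfold Rdist; rewrite !Gamma_gain_input.
  assert (Hnear : norm_le (fun j => gain_input (x n) i j - gain_input xs i j) d).
  { intros j; unfold gain_input, restrict.
    destruct (excluded_middle_informative (inI Ii i j)) as [Hj | _].
    - left; apply HN; auto; lia.
    - rewrite Rminus_0_r, Rabs_R0; lra. }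
  specialize (Hclose _ (gain_input_linfp (x n) i (Hx n)) (gain_input_support (x n) i) Hnear).
  lra.
Qed.

Definition Gamma_ascending (x : nat -> I -> R) : Prop :=
  forall n, nonneg (x n) /\ vle (x n) (x (S n)) /\ vle (G (x n)) (x (S n)).

Lemma Psi_above_bounded_ascending (x : nat -> I -> R) M :
  Gamma_ascending x -> (forall n, norm_le (x n) M) -> exists sh, Psi G sh /\ vle (x O) sh.
Proof.
  intros Hasc HM.
  assert (Hub : forall n i, x n i <= M)
    by (intros n i; eapply Rle_trans; [apply Rle_abs | apply HM]).
  assert (Hgrow : forall i, Un_growing (fun n => x n i))
    by (intros i n; apply (proj1 (proj2 (Hasc n)))).
  assert (Hlim : forall i, {l | Un_cv (fun n => x n i) l}).
  { intros i; apply growing_cv; [apply Hgrow | exists M; intros r [n ->]; apply Hub]. }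
  set (xs i := proj1_sig (Hlim i)).
  assert (Hcv : forall i, Un_cv (fun n => x n i) (xs i))
    by (intros i; exact (proj2_sig (Hlim i))).
  assert (Hbelow : forall n i, x n i <= xs i)
    by (intros n i; exact (growing_ineq _ _ (Hgrow i) (Hcv i) n)).
  assert (Hxs : nonneg xs)
    by (intros i; eapply Rle_trans; [apply (proj1 (Hasc O)) | apply Hbelow]).
  exists xs; split; [split |]; [split; [exact Hxs | exists M] | |].
  - intros i; rewrite Rabs_right by (apply Rle_ge, Hxs).
    exact (Un_cv_le_const _ _ _ (Hcv i) (fun n => Hub n i)).
  - intros i; apply (Un_cv_le_const _ _ _ (Gamma_cv x xs i (fun n => proj1 (Hasc n)) Hxs Hcv)).
    intros n; eapply Rle_trans; [apply (proj2 (proj2 (Hasc n))) | apply Hbelow].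
  - intros i; apply Hbelow.
Qed.

Lemma traj_max_ascending s : nonneg s ->
  Gamma_ascending (fun n => Nat.iter n (fun t => vmax s (G t)) s).
Proof.
  intros Hs.
  assert (Hnn : forall n, nonneg (Nat.iter n (fun t => vmax s (G t)) s))
    by (intros [| n]; [exact Hs | now apply vmax_nonneg]).
  intros n; split; [apply Hnn | split; [| apply vmax_ub_r]].
  induction n as [| n IH]; simpl.
  - apply vmax_ub_l.
  - apply vmax_lub; [apply vmax_ub_l |].
    intros i; eapply Rle_trans; [apply (Gamma_mono _ _ (Hnn n) IH) | apply vmax_ub_r].
Qed.

Lemma traj_hat_ascending s : nonneg s ->
  Gamma_ascending (fun n => Nat.iter n (fun t => vmax t (G t)) s).
Proof.
  intros Hs n.
  assert (Hnn : nonneg (Nat.iter n (fun t => vmax t (G t)) s)).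
  { apply Nat.iter_invariant; [intros t Ht; now apply vmax_nonneg | exact Hs]. }
  split; [exact Hnn | split; [apply vmax_ub_l | apply vmax_ub_r]].
Qed.

Lemma traj_max_bounded_of_cofinal : cofinal (Psi G) ->
  forall b, linfp b -> all_traj_bounded (fun s => vmax b (G s)).
Proof.
  intros Hcof b Hb s Hs.
  destruct (Hcof (vmax b s)) as (sh & ([_ [M HM]] & HGsh) & Hbs_sh); [now apply vmax_linfp |].
  exists M; apply (iter_norm_le_of_box_invariant _ s sh); auto; [| exact (proj1 Hs) |].
  - intros x Hx Hxsh; split; [exact (vmax_nonneg _ _ (proj1 Hb)) |].
    apply vmax_lub.
    + intros i; eapply Rle_trans; [apply vmax_ub_l | apply Hbs_sh].
    + intros i; eapply Rle_trans; [apply (Gamma_mono _ _ Hx Hxsh) | apply HGsh].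
  - intros i; eapply Rle_trans; [apply vmax_ub_r | apply Hbs_sh].
Qed.

Lemma traj_hat_bounded_of_cofinal : cofinal (Psi G) ->
  all_traj_bounded (fun s => vmax s (G s)).
Proof.
  intros Hcof s Hs.
  destruct (Hcof s Hs) as (sh & ([_ [M HM]] & HGsh) & Hssh).
  exists M; apply (iter_norm_le_of_box_invariant _ s sh); auto; [| exact (proj1 Hs)].
  intros x Hx Hxsh; split; [now apply vmax_nonneg |].
  apply vmax_lub; [exact Hxsh |].
  intros i; eapply Rle_trans; [apply (Gamma_mono _ _ Hx Hxsh) | apply HGsh].
Qed.

Lemma cofinal_of_traj_max_bounded :
  (forall b, linfp b -> all_traj_bounded (fun s => vmax b (G s))) -> cofinal (Psi G).
Proof.
  intros Hb s Hs.
  destruct (Hb s Hs s Hs) as [M HM].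
  exact (Psi_above_bounded_ascending _ M (traj_max_ascending s (proj1 Hs)) HM).
Qed.

Lemma cofinal_of_traj_hat_bounded :
  all_traj_bounded (fun s => vmax s (G s)) -> cofinal (Psi G).
Proof.
  intros Hc s Hs.
  destruct (Hc s Hs) as [M HM].
  exact (Psi_above_bounded_ascending _ M (traj_hat_ascending s (proj1 Hs)) HM).
Qed.

Lemma traj_max_below_orbit s sh n : nonneg s -> (1 <= n)%nat ->
  (forall l, (l < n)%nat -> vle s (Nat.iter l G sh)) -> vle (Nat.iter n G sh) sh ->
  forall k, exists r, (r < n)%nat /\
    vle (Nat.iter k (fun t => vmax s (G t)) s) (Nat.iter r G sh).
Proof.
  intros Hs Hn Hl Hret k.
  induction k as [| k [r [Hr Hxr]]].
  - exists O; split; [lia | apply Hl; lia].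
  - pose proof (Gamma_mono _ _ (proj1 (traj_max_ascending s Hs k)) Hxr) as HG.
    destruct (Nat.eq_dec (S r) n) as [<- | Hne].
    + exists O; split; [lia |].
      apply vmax_lub; [apply Hl; lia |].
      intros i; eapply Rle_trans; [apply HG | apply Hret].
    + exists (S r); split; [lia |].
      apply vmax_lub; [apply Hl; lia | exact HG].
Qed.

Lemma cofinal_of_orbit_return :
  (forall s, linfp s -> exists sh (n : nat), linfp sh /\ (1 <= n)%nat /\
     (forall l : nat, (l < n)%nat -> vle s (Nat.iter l G sh)) /\
     vle (Nat.iter n G sh) sh) -> cofinal (Psi G).
Proof.
  intros Hd s Hs.
  destruct (Hd s Hs) as (sh & n & Hsh & Hn & Hl & Hret).
  destruct (norm_le_finite_family (fun l => Nat.iter l G sh) n) as [M HM].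
  { intros l _; apply (Nat.iter_invariant l _ G linfp Gamma_linfp sh Hsh). }
  pose proof (traj_max_ascending s (proj1 Hs)) as Hasc.
  apply (Psi_above_bounded_ascending _ M Hasc).
  intros k; destruct (traj_max_below_orbit s sh n (proj1 Hs) Hn Hl Hret k) as [r [Hr Hxr]].
  exact (norm_le_of_vle _ _ _ (proj1 (Hasc k)) Hxr (HM r Hr)).
Qed.

End GainOperator.

Theorem proposition2p23 (I : Type) (HI : inhabited I)
  (Hcount : exists f : I -> nat, forall x y, f x = f y -> x = y)
  (Ii : I -> list I) (gam : I -> I -> R -> R) (mu : I -> (I -> R) -> Rbar)
  (Hgain : gain_operator Ii gam mu) :
  (cofinal (Psi (Gamma Ii gam mu)) <->
     (forall b, linfp b -> all_traj_bounded (fun s => vmax b (Gamma Ii gam mu s)))) /\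
  (cofinal (Psi (Gamma Ii gam mu)) <->
     all_traj_bounded (fun s => vmax s (Gamma Ii gam mu s))) /\
  (cofinal (Psi (Gamma Ii gam mu)) <->
     (forall s, linfp s -> exists sh (n : nat), linfp sh /\ (1 <= n)%nat /\
        (forall l : nat, (l < n)%nat -> vle s (Nat.iter l (Gamma Ii gam mu) sh)) /\
        vle (Nat.iter n (Gamma Ii gam mu) sh) sh)).
Proof.
  split; [| split]; split.
  - exact (traj_max_bounded_of_cofinal I Ii gam mu Hgain).
  - exact (cofinal_of_traj_max_bounded I Ii gam mu Hgain).
  - exact (traj_hat_bounded_of_cofinal I Ii gam mu Hgain).
  - exact (cofinal_of_traj_hat_bounded I Ii gam mu Hgain).
  - intros Hcof s Hs.
    destruct (Hcof s Hs) as (sh & [Hsh HGsh] & Hssh).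
    exists sh, 1%nat; split; [exact Hsh | split; [lia | split; [| exact HGsh]]].
    intros l Hl; replace l with O by lia; exact Hssh.
  - exact (cofinal_of_orbit_return I Ii gam mu Hgain).
Qed.
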